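(* Let $H$ be a monoid. A set $X\in\mathcal{P}_{\mathrm{fin},1}(H)$ is irreducible but not an atom in $\mathcal{P}_{\mathrm{fin},1}(H)$ if and only if $X=\{1_H,x\}$ for some $x\in H$ such that $x^2=1_H$ or $x^2=x$.
   Context: For a monoid $H$, $\mathcal{P}_{\mathrm{fin},1}(H)$ denotes the set of all non-empty finite subsets of $H$ containing $1_H$, a monoid under $XY=\{xy:x\in X,y\in Y\}$ with identity $\{1_H\}$. In a monoid $M$: $x\mid_M y$ iff $y\in MxM=\{uxv:u,v\in M\}$; $x,y$ are associated if each divides the other; $x$ properly divides $y$ if $x\mid_M y$ and $y\nmid_M x$. A unit-divisor is an element dividing $1_M$; other elements are non-unit-divisors. An irreducible is a non-unit-divisor $a$ such that $a\neq xy$ for all non-unit-divisors $x,y$ properly dividing $a$. An atom is a non-unit-divisor that is not a product of two non-unit-divisors. *)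

From HB Require Import structures.
From mathcomp Require Import all_boot.
From mathcomp Require Import boolp classical_sets cardinality.
Set Implicit Arguments. Unset Strict Implicit. Unset Printing Implicit Defensive.
Local Open Scope classical_set_scope.
Local Open Scope group_scope.

Section PFin1.
Variable H : monoidType.

Definition Pfin1 (X : set H) : Prop := finite_set X /\ X 1.

Definition setmul (X Y : set H) : set H :=
  [set z | exists x y, X x /\ Y y /\ z = x * y].

Definition pdvd (X Y : set H) : Prop :=
  exists U V, Pfin1 U /\ Pfin1 V /\ Y = setmul (setmul U X) V.

Definition pproper_dvd (X Y : set H) : Prop := pdvd X Y /\ ~ pdvd Y X.

Definition punit_div (X : set H) : Prop := pdvd X [set 1].

Definition pirreducible (A : set H) : Prop :=
  Pfin1 A /\ ~ punit_div A /\
  forall X Y, Pfin1 X -> Pfin1 Y -> ~ punit_div X -> ~ punit_div Y ->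
    pproper_dvd X A -> pproper_dvd Y A -> A <> setmul X Y.

Definition patom (A : set H) : Prop :=
  Pfin1 A /\ ~ punit_div A /\
  forall X Y, Pfin1 X -> Pfin1 Y -> ~ punit_div X -> ~ punit_div Y ->
    A <> setmul X Y.
End PFin1.

(** A divisor of [A] in P_fin,1(H) is a subset of [A], so a proper divisor is a
proper subset.  If [A] is irreducible and [A = XY] is a non-trivial factorization,
then [X = A] or [Y = A]; say [A = AY], and pick [z] in [Y \ {1}].  Then [A] contains
[z] and is closed under right multiplication by [z], so [A = (A \ {z}){1, z}]; by
irreducibility again [A = {1, z}], and [z^2 ∈ A] gives [z^2 = 1] or [z^2 = z].
Conversely [{1, x}] has no non-unit-divisor proper divisor at all, hence is
irreducible, and when [x^2 ∈ {1, x}] it equals its own square, hence is no atom. *)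

From HB Require Import structures.
From mathcomp Require Import all_boot.
From mathcomp Require Import boolp classical_sets cardinality.
Set Implicit Arguments. Unset Strict Implicit. Unset Printing Implicit Defensive.
Local Open Scope classical_set_scope.
Local Open Scope group_scope.

Section SetMonoid.
Variable H : monoidType.
Implicit Types (A X Y Z : set H) (x y z : H).

Lemma setmul1X X : setmul [set 1] X = X.
Proof.
apply/seteqP; split=> a /=.
- by move=> [_ [b [-> [Xb ->]]]]; rewrite mul1g.
- by move=> Xa; exists 1, a; rewrite mul1g.
Qed.

Lemma setmulX1 X : setmul X [set 1] = X.
Proof.
apply/seteqP; split=> a /=.
- by move=> [b [_ [Xb [-> ->]]]]; rewrite mulg1.
- by move=> Xa; exists a, 1; rewrite mulg1.
Qed.

Lemma subset_setmull X Y : Y 1 -> X `<=` setmul X Y.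
Proof. by move=> Y1 x Xx; exists x, 1; rewrite mulg1. Qed.

Lemma subset_setmulr X Y : X 1 -> Y `<=` setmul X Y.
Proof. by move=> X1 y Yy; exists 1, y; rewrite mul1g. Qed.

Lemma Pfin1_set1 : Pfin1 [set (1 : H)].
Proof. by split; [exact: finite_set1|]. Qed.

Lemma Pfin1_set2 x : Pfin1 [set 1; x].
Proof. by split; [exact: finite_set2|left]. Qed.

Lemma Pfin1_setD1 A z : Pfin1 A -> z <> 1 -> Pfin1 (A `\ z).
Proof.
move=> [finA A1] z1; split; last by split=> // /esym.
by apply: sub_finite_set finA => a [].
Qed.

Lemma pdvd_subset X Y : pdvd X Y -> X `<=` Y.
Proof.
move=> [U [V [[_ U1] [[_ V1] ->]]]] x Xx.
by apply: subset_setmull V1 _ _; apply: subset_setmulr.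
Qed.

Lemma pdvd_refl X : pdvd X X.
Proof.
exists [set 1], [set 1]; rewrite setmul1X setmulX1.
by do !split; try exact: Pfin1_set1.
Qed.

Lemma pdvd_setmull X Y : Pfin1 Y -> pdvd X (setmul X Y).
Proof.
by move=> PY; exists [set 1], Y; rewrite setmul1X; split; [exact: Pfin1_set1|].
Qed.

Lemma pdvd_setmulr X Y : Pfin1 X -> pdvd Y (setmul X Y).
Proof.
by move=> PX; exists X, [set 1]; rewrite setmulX1; do !split=> //; exact: Pfin1_set1.
Qed.

Lemma nonunit_divP X : X 1 -> ~ punit_div X <-> exists2 x, X x & x <> 1.
Proof.
move=> X1; split=> [nuX|[x Xx x1] /pdvd_subset /(_ x Xx)//].
apply: contrapT => noX; apply: nuX.
suff -> : X = [set 1] by exact: pdvd_refl.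
apply/seteqP; split=> [a Xa|_ ->//]; apply: contrapT => a1.
by apply: noX; exists a.
Qed.

Lemma nonunit_div_set2 x : x <> 1 -> ~ punit_div [set 1; x].
Proof.
by move=> x1; apply/(nonunit_divP (Pfin1_set2 x).2); exists x=> //; right.
Qed.

Lemma not_patom_factor A : Pfin1 A -> ~ punit_div A -> ~ patom A ->
  exists Y Z, [/\ Pfin1 Y, Pfin1 Z, ~ punit_div Y, ~ punit_div Z & A = setmul Y Z].
Proof.
move=> PA nuA natA; apply: contrapT => noYZ; apply: natA.
split=> //; split=> // Y Z PY PZ nuY nuZ eA.
by apply: noYZ; exists Y, Z.
Qed.

Lemma pirreducible_factor A X Y : pirreducible A -> Pfin1 X -> Pfin1 Y ->
  ~ punit_div X -> ~ punit_div Y -> A = setmul X Y -> X = A \/ Y = A.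
Proof.
move=> [_ [_ irrA]] PX PY nuX nuY eA.
have sXA : X `<=` A by rewrite eA; apply: subset_setmull; case: PY.
have sYA : Y `<=` A by rewrite eA; apply: subset_setmulr; case: PX.
apply: contrapT => /not_orP[XA YA].
apply: (irrA X Y PX PY nuX nuY _ _ eA); split.
- by rewrite eA; apply: pdvd_setmull.
- by move/pdvd_subset => sAX; apply: XA; apply/seteqP.
- by rewrite eA; apply: pdvd_setmulr.
- by move/pdvd_subset => sAY; apply: YA; apply/seteqP.
Qed.

Lemma setmul_setD1_set2 A z : A 1 -> A z -> z <> 1 ->
  (forall a, A a -> A (a * z)) -> A = setmul (A `\ z) [set 1; z].
Proof.
move=> A1 Az z1 AzA; apply/seteqP; split=> a.
- move=> Aa; have [->|az] := pselect (a = z).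
    by exists 1, z; rewrite mul1g; do !split=> //; [exact/nesym|right].
  by exists a, 1; rewrite mulg1; do !split=> //=; left.
- by move=> [b [_ [[Ab _] [[]-> ->]]]]; rewrite ?mulg1 //; apply: AzA.
Qed.

Lemma setmul_set2_setD1 A z : A 1 -> A z -> z <> 1 ->
  (forall a, A a -> A (z * a)) -> A = setmul [set 1; z] (A `\ z).
Proof.
move=> A1 Az z1 zAA; apply/seteqP; split=> a.
- move=> Aa; have [->|az] := pselect (a = z).
    by exists z, 1; rewrite mulg1; do !split=> //; [right|exact/nesym].
  by exists 1, a; rewrite mul1g; do !split=> //=; left.
- by move=> [_ [b [[]-> [[Ab _] ->]]]]; rewrite ?mul1g //; apply: zAA.
Qed.

Lemma pirreducible_set2 A z : pirreducible A -> A z -> z <> 1 ->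
  A = setmul (A `\ z) [set 1; z] \/ A = setmul [set 1; z] (A `\ z) ->
  A = [set 1; z].
Proof.
move=> irrA Az z1 eA; have [PA _] := irrA.
apply/seteqP; split=> [w Aw|_ [] ->//]; last by case: PA.
apply: contrapT => /not_orP[w1 wz].
have PD := Pfin1_setD1 PA z1.
have nuD : ~ punit_div (A `\ z) by apply/(nonunit_divP (proj2 PD)); exists w.
have nu2 := nonunit_div_set2 z1.
have : A `\ z = A \/ [set 1; z] = A.
  case: eA => eA.
  - exact: pirreducible_factor irrA PD (Pfin1_set2 z) nuD nu2 eA.
  - by apply/or_comm; apply: pirreducible_factor irrA (Pfin1_set2 z) PD nu2 nuD eA.
case=> [eD|e2].
- by move: Az; rewrite -eD => -[_ /(_ erefl)].
- by move: Aw; rewrite -e2 => -[/w1|/wz].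
Qed.

Lemma pirreducible_setmul_stabler A Z z : pirreducible A -> A = setmul A Z ->
  Z z -> z <> 1 -> A = [set 1; z] /\ (z * z = 1 \/ z * z = z).
Proof.
move=> irrA eA Zz z1; have [[_ A1] _] := irrA.
have AzA a : A a -> A (a * z) by move=> Aa; rewrite eA; exists a, z.
have Az : A z by rewrite -(mul1g z); apply: AzA.
have eA2 : A = [set 1; z].
  by apply: pirreducible_set2 => //; left; apply: setmul_setD1_set2.
by split=> //; move: (AzA z Az); rewrite {1}eA2.
Qed.

Lemma pirreducible_setmul_stablel A Y y : pirreducible A -> A = setmul Y A ->
  Y y -> y <> 1 -> A = [set 1; y] /\ (y * y = 1 \/ y * y = y).
Proof.
move=> irrA eA Yy y1; have [[_ A1] _] := irrA.
have yAA a : A a -> A (y * a) by move=> Aa; rewrite eA; exists y, a.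
have Ay : A y by rewrite -(mulg1 y); apply: yAA.
have eA2 : A = [set 1; y].
  by apply: pirreducible_set2 => //; right; apply: setmul_set2_setD1.
by split=> //; move: (yAA y Ay); rewrite {1}eA2.
Qed.

Lemma pirreducible_set2_nontrivial x : x <> 1 -> pirreducible [set 1; x].
Proof.
move=> x1; have nu2 := nonunit_div_set2 x1.
split; first exact: Pfin1_set2.
split=> // Y Z [_ Y1] _ nuY _ [dY ndY] _ _; apply: ndY.
suff -> : Y = [set 1; x] by exact: pdvd_refl.
have [y Yy y1] := (nonunit_divP Y1).1 nuY.
have sY := pdvd_subset dY.
apply/seteqP; split=> // _ [] -> //.
by case: (sY y Yy) => // eyx; rewrite -eyx.
Qed.

Lemma setmul_set2_idem x : x * x = 1 \/ x * x = x ->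
  setmul [set 1; x] [set 1; x] = [set 1; x].
Proof.
move=> xx; apply/seteqP; split=> a.
- by move=> [_ [_ [[]-> [[]-> ->]]]]; rewrite ?mul1g ?mulg1; [left|right|right|].
- by move=> [->|->]; [exists 1, 1; rewrite mulg1|exists 1, x; rewrite mul1g];
    do !split; (left + right).
Qed.

End SetMonoid.

Theorem proposition2p3 (H : monoidType) (X : set H) :
  Pfin1 X ->
  (pirreducible X /\ ~ patom X <->
   exists x : H, x <> 1 /\ X = [set 1; x] /\ (x * x = 1 \/ x * x = x)).
Proof.
move=> PX; split.
- move=> [irrX natX]; have [_ [nuX _]] := irrX.
  have [Y [Z [PY PZ nuY nuZ eX]]] := not_patom_factor PX nuX natX.
  have [y Yy y1] := (nonunit_divP (proj2 PY)).1 nuY.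
  have [z Zz z1] := (nonunit_divP (proj2 PZ)).1 nuZ.
  have [eY|eZ] := pirreducible_factor irrX PY PZ nuY nuZ eX.
  + exists z; split=> //.
    by apply: pirreducible_setmul_stabler irrX _ Zz z1; rewrite -{2}eY.
  + exists y; split=> //.
    by apply: pirreducible_setmul_stablel irrX _ Yy y1; rewrite -{2}eZ.
- move=> [x [x1 [-> xx]]].
  split; first exact: pirreducible_set2_nontrivial.
  move=> [P2 [nu2 atom2]].
  exact: (atom2 _ _ P2 P2 nu2 nu2 (esym (setmul_set2_idem xx))).
Qed.
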